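(* Let $M$ be an intrinsically projective right $R$-module and let $A,B\le M$ be finitely $M$-presented submodules. Then $A+B$ is finitely $M$-presented if and only if $A\cap B$ is finitely $M$-generated.
   Context: $M^{(n)}$ denotes the direct sum of $n$ copies of $M$. A module $N$ is finitely $M$-generated if there is an epimorphism $M^{(n)}\to N$ for some $n>0$. $N$ is finitely $M$-presented if there is an exact sequence $M^{(\ell)}\to M^{(n)}\to N\to 0$ for some integers $n,\ell>0$. $M$ is intrinsically projective if for every integer $n>0$, every submodule $N\le M$, every epimorphism $\alpha:M^{(n)}\to N$ and every homomorphism $\beta:M\to N$, there exists $\gamma:M\to M^{(n)}$ with $\alpha\gamma=\beta$. *)

From HB Require Import structures.
From mathcomp Require Import all_boot all_algebra.
Set Implicit Arguments. Unset Strict Implicit. Unset Printing Implicit Defensive.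
Import GRing.Theory.
Local Open Scope ring_scope.

(* Right R-modules are represented as left modules over the converse ring R^c;
   the definitions below are stated for an arbitrary (left) module M over a
   ring S, and instantiated with S := R^c in the main statement. *)
Section ModuleDefs.
Variable S : pzRingType.
Variable M : lmodType S.

Definition dsum (n : nat) : lmodType S := {ffun 'I_n -> M}.

Definition submodule (N : M -> Prop) : Prop :=
  N 0 /\ forall (a : S) (x y : M), N x -> N y -> N (a *: x + y).

Definition sum_sub (A B : M -> Prop) : M -> Prop :=
  fun x => exists a b, A a /\ B b /\ x = a + b.
Definition cap_sub (A B : M -> Prop) : M -> Prop := fun x => A x /\ B x.

Definition image_of (U V : Type) (f : U -> V) : V -> Prop :=
  fun v => exists u, f u = v.

Definition fin_M_generated (N : M -> Prop) : Prop :=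
  exists n : nat, (0 < n)%N /\
    exists f : {linear dsum n -> M}, forall x, N x <-> image_of f x.

Definition fin_M_presented (N : M -> Prop) : Prop :=
  exists n l : nat, (0 < n)%N /\ (0 < l)%N /\
    exists (f : {linear dsum n -> M}) (g : {linear dsum l -> dsum n}),
      (forall x, N x <-> image_of f x) /\
      (forall y, f y = 0 <-> image_of g y).

(* M is intrinsically projective; a map into the submodule N is represented
   as a linear map into M with values in N. *)
Definition intrinsically_projective : Prop :=
  forall n : nat, (0 < n)%N ->
  forall N : M -> Prop, submodule N ->
  forall alpha : {linear dsum n -> M}, (forall x, N x <-> image_of alpha x) ->
  forall beta : {linear M -> M}, (forall x, N (beta x)) ->
  exists gamma : {linear M -> dsum n}, forall x, alpha (gamma x) = beta x.

End ModuleDefs.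

From HB Require Import structures.
From mathcomp Require Import all_boot all_algebra.
Set Implicit Arguments. Unset Strict Implicit. Unset Printing Implicit Defensive.
Import GRing.Theory.
Local Open Scope ring_scope.

(* Let A, B <= M be finitely M-presented, with epimorphisms fA : M^(nA) -> A
   and fB : M^(nB) -> B whose kernels are finitely M-generated.  Then
   [fA fB] : M^(nA+nB) -> A + B is an epimorphism, and the first block
   y |-> fA (y_A) maps its kernel onto A /\ B.
   - The lifting property of an intrinsically projective M extends from M to
     every M^(k) (ip_lift_dsum).  A Schanuel-type argument then shows that
     when N is finitely M-presented, EVERY epimorphism M^(n') -> N has a
     finitely M-generated kernel (ker_fin_M_generated_epi).
   - (=>) If A + B is finitely M-presented, ker [fA fB] is finitely
     M-generated, hence so is its image A /\ B.
   - (<=) If c : M^(k) -> A /\ B is onto, lift c through fA and fB to pA, pB;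
     then ker [fA fB] is generated by ker fA, ker fB and (pA, -pB). *)

Section Submodules.
Variables (S : pzRingType) (M : lmodType S).

Lemma submoduleN (N : M -> Prop) : submodule N -> forall x, N x -> N (- x).
Proof.
by case=> N0 NP x Nx; have := NP (-1) x 0 Nx N0; rewrite scaleN1r addr0.
Qed.

Lemma submodule_sum (A B : M -> Prop) :
  submodule A -> submodule B -> submodule (sum_sub A B).
Proof.
move=> [A0 AP] [B0 BP]; split; first by exists 0, 0; rewrite addr0.
move=> c _ _ [a1 [b1 [Aa1 [Bb1 ->]]]] [a2 [b2 [Aa2 [Bb2 ->]]]].
exists (c *: a1 + a2), (c *: b1 + b2).
by split; [exact: AP | split; [exact: BP | rewrite scalerDr addrACA]].
Qed.

End Submodules.

Section DirectSums.
Variables (S : pzRingType) (M : lmodType S).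
Local Notation D n := (dsum M n).

Definition dsum_inj n (i : 'I_n) (m : M) : D n :=
  [ffun j => if j == i then m else 0].

Lemma dsum_inj_is_linear n i : linear (@dsum_inj n i).
Proof.
move=> a x y; apply/ffunP=> j; rewrite !ffunE; case: eqP => _ //.
by rewrite scaler0 addr0.
Qed.
HB.instance Definition _ n i := GRing.isLinear.Build S M (D n) *:%R
  (@dsum_inj n i) (@dsum_inj_is_linear n i).

Lemma dsum_sum_inj n (x : D n) : x = \sum_i dsum_inj i (x i).
Proof.
apply/ffunP=> j; rewrite sum_ffunE (bigD1 j) //= big1 ?addr0.
  by rewrite ffunE eqxx.
by move=> i ij; rewrite ffunE eq_sym (negbTE ij).
Qed.

Definition dsum_copair k (V : lmodType S) (g : 'I_k -> {linear M -> V})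
  (x : D k) : V := \sum_i g i (x i).

Lemma dsum_copair_is_linear k V g : linear (@dsum_copair k V g).
Proof.
move=> a x y; rewrite /dsum_copair scaler_sumr -big_split.
by apply: eq_bigr => i _; rewrite !ffunE linearP.
Qed.
HB.instance Definition _ k (V : lmodType S) g :=
  GRing.isLinear.Build S (D k) V *:%R
  (@dsum_copair k V g) (@dsum_copair_is_linear k V g).

Section Blocks.
Variables n m : nat.

Definition dsum_l (x : D (n + m)) : D n := [ffun i => x (lshift m i)].
Definition dsum_r (x : D (n + m)) : D m := [ffun j => x (rshift n j)].
Definition dsum_pair (y : D n) (z : D m) : D (n + m) :=
  [ffun k => match split k with inl i => y i | inr j => z j end].

Lemma dsum_l_pair y z : dsum_l (dsum_pair y z) = y.
Proof. by apply/ffunP=> i; rewrite !ffunE (unsplitK (inl i : 'I_n + 'I_m)). Qed.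

Lemma dsum_r_pair y z : dsum_r (dsum_pair y z) = z.
Proof. by apply/ffunP=> j; rewrite !ffunE (unsplitK (inr j : 'I_n + 'I_m)). Qed.

Lemma dsum_pair_lr x : dsum_pair (dsum_l x) (dsum_r x) = x.
Proof.
apply/ffunP=> k; rewrite !ffunE.
case E: (split k) => [i|j]; rewrite ffunE; congr (x _);
  by rewrite -[RHS](splitK k) E.
Qed.

Lemma dsum_l_is_linear : linear dsum_l.
Proof. by move=> a x y; apply/ffunP=> i; rewrite !ffunE. Qed.
HB.instance Definition _ := GRing.isLinear.Build S (D (n + m)) (D n) *:%R
  dsum_l dsum_l_is_linear.

Lemma dsum_r_is_linear : linear dsum_r.
Proof. by move=> a x y; apply/ffunP=> j; rewrite !ffunE. Qed.
HB.instance Definition _ := GRing.isLinear.Build S (D (n + m)) (D m) *:%R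
  dsum_r dsum_r_is_linear.

Definition dsum_pairf (U : lmodType S) (u : {linear U -> D n})
  (v : {linear U -> D m}) (x : U) : D (n + m) := dsum_pair (u x) (v x).

Lemma dsum_pairf_is_linear U u v : linear (@dsum_pairf U u v).
Proof.
move=> a x y; rewrite -[RHS]dsum_pair_lr /dsum_pairf !linearP /=.
by rewrite !dsum_l_pair !dsum_r_pair.
Qed.
HB.instance Definition _ (U : lmodType S) u v :=
  GRing.isLinear.Build S U (D (n + m)) *:%R
  (@dsum_pairf U u v) (@dsum_pairf_is_linear U u v).

End Blocks.

Definition ker_fin_M_generated n (f : {linear D n -> M}) : Prop :=
  exists m, (0 < m)%N /\
    exists h : {linear D m -> D n}, forall y, f y = 0 <-> image_of h y.

Lemma fin_M_presentedP (N : M -> Prop) :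
  fin_M_presented N <-> exists n, (0 < n)%N /\
    exists f : {linear D n -> M},
      (forall x, N x <-> image_of f x) /\ ker_fin_M_generated f.
Proof.
split.
  by case=> n [l [n0 [l0 [f [g [Hf Hg]]]]]]; exists n; split=> //; exists f;
    split=> //; exists l; split=> //; exists g.
by case=> n [n0 [f [Hf [l [l0 [g Hg]]]]]]; exists n, l; do 2!split=> //;
  exists f, g.
Qed.

End DirectSums.

Arguments dsum_l {S M} n m.
Arguments dsum_r {S M} n m.

Section IntrinsicProjectivity.
Variables (S : pzRingType) (M : lmodType S).
Local Notation D n := (dsum M n).
Hypothesis IP : intrinsically_projective M.

(* Maps from any M^(k) into N lift through an epimorphism M^(n) -> N:
   lift each restriction to a coordinate copy of M and glue them. *)
Lemma ip_lift_dsum n (n0 : (0 < n)%N) (N : M -> Prop) (sN : submodule N)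
    (alpha : {linear D n -> M}) (Halpha : forall x, N x <-> image_of alpha x)
    k (beta : {linear D k -> M}) (Hbeta : forall x, N (beta x)) :
  exists gamma : {linear D k -> D n}, forall x, alpha (gamma x) = beta x.
Proof.
have /fin_all_exists [g Hg] : forall i : 'I_k, exists g : {linear M -> D n},
    forall m, alpha (g m) = beta (dsum_inj i m).
  move=> i; have [g Hg] :=
    IP n0 sN Halpha (beta := beta \o dsum_inj i) (fun m => Hbeta _).
  by exists g.
exists (dsum_copair g) => x; rewrite /= /dsum_copair linear_sum.
by under eq_bigr do rewrite Hg; rewrite -linear_sum -dsum_sum_inj.
Qed.

(* With p, q lifting f'
   through f and f through f', ker f' is the image of
   (y, u) |-> y - q (p y) + q (g u), where g generates ker f. *)
Lemma ker_fin_M_generated_epi (N : M -> Prop) (sN : submodule N)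
    n (n0 : (0 < n)%N) (f : {linear D n -> M})
    (Hf : forall x, N x <-> image_of f x) (kerf : ker_fin_M_generated f)
    n' (n'0 : (0 < n')%N) (f' : {linear D n' -> M})
    (Hf' : forall x, N x <-> image_of f' x) :
  ker_fin_M_generated f'.
Proof.
have im_f x : N (f x) by apply/Hf; exists x.
have im_f' x : N (f' x) by apply/Hf'; exists x.
have [p fp] := ip_lift_dsum n0 sN Hf im_f'.
have [q f'q] := ip_lift_dsum n'0 sN Hf' im_f.
case: kerf => l [l0 [g Hg]].
have fg u : f (g u) = 0 by apply/Hg; exists u.
exists (n' + l)%N; split; first by rewrite addn_gt0 n'0.
exists ((dsum_l n' l \- (q \o p \o dsum_l n' l)) \+ (q \o g \o dsum_r n' l)).
move=> y.
split=> [f'y | [z <-]] /=.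
  have [u pu] : image_of g (p y) by apply/Hg; rewrite fp.
  by exists (dsum_pair y u); rewrite /= dsum_l_pair dsum_r_pair pu addrNK.
by rewrite !linearD linearN !f'q fp fg addrN add0r.
Qed.

End IntrinsicProjectivity.

Section SumAndIntersection.
Variables (S : pzRingType) (M : lmodType S) (A B : M -> Prop).
Local Notation D n := (dsum M n).
Variables (nA nB : nat) (fA : {linear D nA -> M}) (fB : {linear D nB -> M}).
Hypotheses (HfA : forall x, A x <-> image_of fA x)
           (HfB : forall x, B x <-> image_of fB x).
Hypothesis sB : submodule B.

Definition sum_map : {linear D (nA + nB) -> M} :=
  (fA \o dsum_l nA nB) \+ (fB \o dsum_r nA nB).

Lemma sum_mapE y : sum_map y = fA (dsum_l nA nB y) + fB (dsum_r nA nB y).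
Proof. by []. Qed.

Lemma sum_map_image x : sum_sub A B x <-> image_of sum_map x.
Proof.
split=> [[a [b [/HfA [y <-] [/HfB [z <-] ->]]]] | [w <-]].
  by exists (dsum_pair y z); rewrite sum_mapE dsum_l_pair dsum_r_pair.
exists (fA (dsum_l nA nB w)), (fB (dsum_r nA nB w)).
split; first by apply/HfA; exists (dsum_l nA nB w).
by split; first by apply/HfB; exists (dsum_r nA nB w).
Qed.

Lemma sum_map_kernel_cap y : sum_map y = 0 -> cap_sub A B (fA (dsum_l nA nB y)).
Proof.
rewrite sum_mapE => /eqP; rewrite addr_eq0 => /eqP fAfB.
split; first by apply/HfA; exists (dsum_l nA nB y).
by rewrite fAfB; apply: submoduleN => //; apply/HfB; exists (dsum_r nA nB y).
Qed.

Lemma cap_sum_map_kernel x :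
  cap_sub A B x -> exists y, sum_map y = 0 /\ fA (dsum_l nA nB y) = x.
Proof.
case=> /HfA [u fAu] /(submoduleN sB) /HfB [v fBv].
exists (dsum_pair u v).
by rewrite sum_mapE dsum_l_pair dsum_r_pair fAu fBv addrN.
Qed.

Lemma cap_generated_of_kernel :
  ker_fin_M_generated sum_map -> fin_M_generated (cap_sub A B).
Proof.
case=> m [m0 [h Hh]]; exists m; split=> //.
exists (fA \o dsum_l nA nB \o h) => x; split.
  by case/cap_sum_map_kernel=> y [/Hh [w <-] <-]; exists w.
by case=> w <-; apply: sum_map_kernel_cap; apply/Hh; exists w.
Qed.


(* Backward direction: if c : M^(k) -> A /\ B is onto and pA, pB lift c
   through fA, fB, then ker [fA fB] is generated by gA (ker fA), gB (ker fB)
   and w |-> (pA w, - pB w). *)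
Lemma kernel_of_cap_generated (IP : intrinsically_projective M)
    (sA : submodule A) (nA0 : (0 < nA)%N) (nB0 : (0 < nB)%N) :
  ker_fin_M_generated fA -> ker_fin_M_generated fB ->
  fin_M_generated (cap_sub A B) -> ker_fin_M_generated sum_map.
Proof.
case=> lA [lA0 [gA HgA]] [lB [lB0 [gB HgB]]] [k [k0 [c Hc]]].
have cap_c w : cap_sub A B (c w) by apply/Hc; exists w.
have [pA fApA] := ip_lift_dsum IP nA0 sA HfA (fun w => proj1 (cap_c w)).
have [pB fBpB] := ip_lift_dsum IP nB0 sB HfB (fun w => proj2 (cap_c w)).
have fAgA u : fA (gA u) = 0 by apply/HgA; exists u.
have fBgB v : fB (gB v) = 0 by apply/HgB; exists v.
exists (lA + lB + k)%N; split; first by rewrite !addn_gt0 lA0.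
exists (dsum_pairf
  ((gA \o dsum_l lA lB \o dsum_l (lA + lB) k) \+ (pA \o dsum_r (lA + lB) k))
  ((gB \o dsum_r lA lB \o dsum_l (lA + lB) k) \- (pB \o dsum_r (lA + lB) k))).
move=> y; split=> [ker_y | [z <-]].
  have [w cw] := proj1 (Hc _) (sum_map_kernel_cap ker_y).
  have [u gAu] : image_of gA (dsum_l nA nB y - pA w).
    by apply/HgA; rewrite linearB fApA cw addrN.
  have [v gBv] : image_of gB (dsum_r nA nB y + pB w).
    by apply/HgB; rewrite linearD fBpB cw addrC -sum_mapE.
  exists (dsum_pair (dsum_pair u v) w).
  rewrite /= /dsum_pairf /= !dsum_l_pair !dsum_r_pair gAu gBv.
  by rewrite subrK addrK dsum_pair_lr.
rewrite sum_mapE /= /dsum_pairf /= dsum_l_pair dsum_r_pair linearD linearB.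
by rewrite fApA fBpB fAgA fBgB !add0r addrN.
Qed.

End SumAndIntersection.

Theorem mainTheorem11 (R : pzRingType) (M : lmodType R^c) (A B : M -> Prop) :
  intrinsically_projective M ->
  submodule A -> submodule B ->
  fin_M_presented A -> fin_M_presented B ->
  (fin_M_presented (sum_sub A B) <-> fin_M_generated (cap_sub A B)).
Proof.
move=> IP sA sB /fin_M_presentedP [nA [nA0 [fA [HfA kerA]]]]
  /fin_M_presentedP [nB [nB0 [fB [HfB kerB]]]].
have sum_im := sum_map_image HfA HfB.
split=> [/fin_M_presentedP [n [n0 [f [Hf kerf]]]] | cap_gen].
  apply: (cap_generated_of_kernel HfA HfB sB).
  have nAB0 : (0 < nA + nB)%N by rewrite addn_gt0 nA0.
  exact (ker_fin_M_generated_epi IP (submodule_sum sA sB) n0 Hf kerf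
           nAB0 sum_im).
apply/fin_M_presentedP; exists (nA + nB)%N.
split; first by rewrite addn_gt0 nA0.
exists (sum_map fA fB); split; first exact: sum_im.
exact: kernel_of_cap_generated.
Qed.
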